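(* Let $A(x_1,\dots,x_4)$ be the matrix $$A(x_1,x_2,x_3,x_4)=\begin{bmatrix}x_1 & x_2 & x_3 & x_4\\ -nx_2 & x_1+mx_2 & -nx_4 & x_3+mx_4\\ -qx_3 & -qx_4 & x_1+px_3 & x_2+px_4\\ qnx_4 & -q(x_3+mx_4) & -nx_2-pnx_4 & x_1+mx_2+p(x_3+mx_4)\end{bmatrix},$$ let $P(x_1,\dots,x_8)=\begin{bmatrix}A(x_1,\dots,x_4) & A(x_5,\dots,x_8)\\ -sA(x_5,\dots,x_8) & A(x_1,\dots,x_4)+rA(x_5,\dots,x_8)\end{bmatrix}$, and $f=\det P$, with parameter values $(m,n,p,q,r,s)=(0,-5,0,-3,0,-14)$. Then the octic diophantine equation $f(x_1,\dots,x_8)=1$ has infinitely many solutions in positive integers (one of them being $(4,2,2,1,14,7,8,4)$). *)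

From mathcomp Require Import all_boot all_order all_algebra.
Set Implicit Arguments. Unset Strict Implicit. Unset Printing Implicit Defensive.
Import GRing.Theory Num.Theory.
Local Open Scope ring_scope.

Definition Amat (m n p q : int) (x1 x2 x3 x4 : int) : 'M[int]_4 :=
  \matrix_(i < 4, j < 4)
    (nth 0 (nth [::] (
    [:: [:: x1; x2; x3; x4];
        [:: - n * x2; x1 + m * x2; - n * x4; x3 + m * x4];
        [:: - q * x3; - q * x4; x1 + p * x3; x2 + p * x4];
        [:: q * n * x4; - q * (x3 + m * x4); - n * x2 - p * n * x4;
            x1 + m * x2 + p * (x3 + m * x4)] ] : seq (seq int)) i) j).

Definition Pmat (m n p q r s : int) (x : {ffun 'I_8 -> int}) : 'M[int]_(4 + 4) :=
  let A1 := Amat m n p q (x (inord 0)) (x (inord 1)) (x (inord 2)) (x (inord 3)) in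
  let A2 := Amat m n p q (x (inord 4)) (x (inord 5)) (x (inord 6)) (x (inord 7)) in
  block_mx A1 A2 (- s *: A2) (A1 + r *: A2).

Definition fpoly (m n p q r s : int) (x : {ffun 'I_8 -> int}) : int :=
  \det (Pmat m n p q r s x).

Definition f0 (x : {ffun 'I_8 -> int}) : int := fpoly 0 (-5) 0 (-3) 0 (-14) x.

Definition pos_solution (x : {ffun 'I_8 -> int}) : Prop :=
  (forall i, 0 < x i) /\ f0 x = 1.

Definition tup8 (a b c d e g h k : int) : {ffun 'I_8 -> int} :=
  [ffun i : 'I_8 => nth 0 [:: a; b; c; d; e; g; h; k] i].

From mathcomp Require Import all_boot all_order all_algebra.
From mathcomp Require Import ring zify.
Set Implicit Arguments. Unset Strict Implicit. Unset Printing Implicit Defensive.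
Import GRing.Theory Num.Theory.
Local Open Scope ring_scope.

(* The matrix A(x) is the left regular representation of
   x = x1 + x2 a + x3 b + x4 ab in the commutative ring Z[a, b] with
   a^2 = m a - n and b^2 = p b - q; likewise P(x) is the regular representation
   of X + Y t (X, Y in Z[a, b]) in the quadratic extension t^2 = r t - s.
   Hence, for ALL parameters, A(x) A(y) = A(x y) and P(x) P(y) = P(x y) for an
   explicit bilinear product on 8-tuples, so f = det P is multiplicative:
   f(x y) = f(x) f(y).  For (m,n,p,q,r,s) = (0,-5,0,-3,0,-14) all structure
   constants are nonnegative, so the powers u^(k+1) of the solution
   u = (4,2,2,1,14,7,8,4) are positive solutions of f = 1, whose first
   coordinate grows strictly; such a sequence escapes every finite list.
   The value f(u) = 1 comes from a Schur-complement formula for the block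
   determinant together with the norm form det A(x) at these parameters. *)

Ltac entrywise4 :=
  apply/matrixP=> -[[|[|[|[|?]]]] ?] -[[|[|[|[|?]]]] ?] //;
  rewrite !mxE ?big_ord_recr ?big_ord0 /= ?mxE /=; ring.

(* Elements of Z[a, b], as coordinate quadruples in the basis 1, a, b, ab. *)
Definition quad := (int * int * int * int)%type.

Section QuadAlgebra.
Variables m n p q : int.

Definition Aq (x : quad) : 'M[int]_4 :=
  let: (x1, x2, x3, x4) := x in Amat m n p q x1 x2 x3 x4.

Definition qadd (x y : quad) : quad :=
  let: (x1, x2, x3, x4) := x in let: (y1, y2, y3, y4) := y in
  (x1 + y1, x2 + y2, x3 + y3, x4 + y4).

Definition qscale (k : int) (x : quad) : quad :=
  let: (x1, x2, x3, x4) := x in (k * x1, k * x2, k * x3, k * x4).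

(* The product in Z[a, b]: compute in Z[a] first, then use b^2 = p b - q. *)
Definition qmul (x y : quad) : quad :=
  let: (x1, x2, x3, x4) := x in let: (y1, y2, y3, y4) := y in
  (x1 * y1 - n * x2 * y2 - q * (x3 * y3 - n * x4 * y4),
   x1 * y2 + x2 * y1 + m * x2 * y2 - q * (x3 * y4 + x4 * y3 + m * x4 * y4),
   x1 * y3 - n * x2 * y4 + x3 * y1 - n * x4 * y2 + p * (x3 * y3 - n * x4 * y4),
   x1 * y4 + x2 * y3 + m * x2 * y4 + x3 * y2 + x4 * y1 + m * x4 * y2
     + p * (x3 * y4 + x4 * y3 + m * x4 * y4)).

Lemma Aq_add x y : Aq x + Aq y = Aq (qadd x y).
Proof. by case: x => [[[x1 x2] x3] x4]; case: y => [[[y1 y2] y3] y4]; entrywise4. Qed.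

Lemma Aq_scale k x : k *: Aq x = Aq (qscale k x).
Proof. by case: x => [[[x1 x2] x3] x4]; entrywise4. Qed.

Lemma Aq_mul x y : Aq x *m Aq y = Aq (qmul x y).
Proof. by case: x => [[[x1 x2] x3] x4]; case: y => [[[y1 y2] y3] y4]; entrywise4. Qed.

(* Z[a, b] is commutative, hence so are the matrices A(x). *)
Lemma Aq_comm x y : Aq x *m Aq y = Aq y *m Aq x.
Proof.
rewrite !Aq_mul; congr Aq.
by case: x => [[[x1 x2] x3] x4]; case: y => [[[y1 y2] y3] y4]; congr (_, _, _, _); ring.
Qed.
End QuadAlgebra.

Definition lo (x : {ffun 'I_8 -> int}) : quad :=
  (x (inord 0), x (inord 1), x (inord 2), x (inord 3)).
Definition hi (x : {ffun 'I_8 -> int}) : quad :=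
  (x (inord 4), x (inord 5), x (inord 6), x (inord 7)).
Definition oct (a b : quad) : {ffun 'I_8 -> int} :=
  let: (a1, a2, a3, a4) := a in let: (b1, b2, b3, b4) := b in
  tup8 a1 a2 a3 a4 b1 b2 b3 b4.

Lemma lo_oct a b : lo (oct a b) = a.
Proof.
by case: a => [[[? ?] ?] ?]; case: b => [[[? ?] ?] ?]; rewrite /lo !ffunE !inordK.
Qed.

Lemma hi_oct a b : hi (oct a b) = b.
Proof.
by case: a => [[[? ?] ?] ?]; case: b => [[[? ?] ?] ?]; rewrite /hi !ffunE !inordK.
Qed.

Section OcticAlgebra.
Variables m n p q r s : int.
Local Notation Aq := (Aq m n p q).
Local Notation qmul := (qmul m n p q).

Definition Pq (a b : quad) : 'M[int]_(4 + 4) :=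
  block_mx (Aq a) (Aq b) (- s *: Aq b) (Aq a + r *: Aq b).

Definition pmul (a b c d : quad) : quad * quad :=
  (qadd (qmul a c) (qscale (- s) (qmul b d)),
   qadd (qadd (qmul a d) (qmul b c)) (qscale r (qmul b d))).

Lemma Pq_mul a b c d :
  Pq a b *m Pq c d = Pq (pmul a b c d).1 (pmul a b c d).2.
Proof.
case: a => [[[a1 a2] a3] a4]; case: b => [[[b1 b2] b3] b4].
case: c => [[[c1 c2] c3] c4]; case: d => [[[d1 d2] d3] d4].
rewrite /Pq mulmx_block !(mulmxDl, mulmxDr) -!(scalemxAl, scalemxAr) !Aq_mul.
rewrite !Aq_scale !Aq_add.
by congr block_mx; congr Aq; rewrite /=; congr (_, _, _, _); ring.
Qed.

Lemma Pmat_halves x : Pmat m n p q r s x = Pq (lo x) (hi x).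
Proof. by []. Qed.

Definition omul (x y : {ffun 'I_8 -> int}) : {ffun 'I_8 -> int} :=
  let ab := pmul (lo x) (hi x) (lo y) (hi y) in oct ab.1 ab.2.

Lemma Pmat_mul x y :
  Pmat m n p q r s (omul x y) = Pmat m n p q r s x *m Pmat m n p q r s y.
Proof. by rewrite !Pmat_halves Pq_mul lo_oct hi_oct. Qed.

Lemma fpoly_mul x y :
  fpoly m n p q r s (omul x y) = fpoly m n p q r s x * fpoly m n p q r s y.
Proof. by rewrite /fpoly Pmat_mul det_mulmx. Qed.
End OcticAlgebra.

Lemma det_block_comm (R : idomainType) k (A B C D : 'M[R]_k) :
  C *m D = D *m C -> \det D != 0 ->
  \det (block_mx A B C D) = \det (A *m D - B *m C).
Proof.
move=> CD_comm detD_neq0; apply: (mulIf detD_neq0).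
have elim_C : block_mx A B C D *m block_mx D 0 (- C) 1%:M =
              block_mx (A *m D - B *m C) B 0 D.
  by rewrite mulmx_block !mulmx0 !mulmx1 !add0r !mulmxN CD_comm subrr.
by rewrite -(det_ublock _ B) -elim_C det_mulmx det_lblock det1 mulr1.
Qed.

Lemma det_mx33 (R : comPzRingType) (M : 'M[R]_3) :
  let e (i j : nat) := M (inord i) (inord j) in
  \det M = e 0 0 * (e 1 1 * e 2 2 - e 1 2 * e 2 1)
         - e 0 1 * (e 1 0 * e 2 2 - e 1 2 * e 2 0)
         + e 0 2 * (e 1 0 * e 2 1 - e 1 1 * e 2 0).
Proof.
move=> e; have {1}-> : M = \matrix_(i, j) e i j.
  by apply/matrixP=> i j; rewrite mxE /e !inord_val.
do 2 rewrite !(expand_det_row _ ord0) !big_ord_recr !big_ord0 /= /cofactor.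
by rewrite !det_mx11 !mxE /=; ring.
Qed.

Local Notation A0 := (Aq 0 (-5) 0 (-3)).

(* At the parameters of the theorem a = sqrt 5 and b = sqrt 3, and det A(x)
   is the norm form of Q(sqrt 5, sqrt 3)/Q, computed through Q(sqrt 5). *)
Definition N4 (x : quad) : int :=
  let: (a, b, c, d) := x in
  (a ^+ 2 + 5 * b ^+ 2 - 3 * c ^+ 2 - 15 * d ^+ 2) ^+ 2
  - 5 * (2 * a * b - 6 * c * d) ^+ 2.

Lemma det_A0 x : \det (A0 x) = N4 x.
Proof.
case: x => [[[a b] c] d].
rewrite (expand_det_row _ ord0) !big_ord_recr big_ord0 /= /cofactor !det_mx33.
by rewrite !mxE /= !inordK //=; ring.
Qed.

Definition u : {ffun 'I_8 -> int} := tup8 4 2 2 1 14 7 8 4.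

Lemma lo_u : lo u = (4, 2, 2, 1).
Proof. by rewrite /lo !ffunE !inordK. Qed.

Lemma hi_u : hi u = (14, 7, 8, 4).
Proof. by rewrite /hi !ffunE !inordK. Qed.

(* f(u) = N4(a^2 - 14 b^2) = 1 for u = (a, b), using that N4(a) = 1 != 0. *)
Lemma f0_u : f0 u = 1.
Proof.
rewrite /f0 /fpoly Pmat_halves /Pq scale0r addr0 opprK.
have A0_comm : (14 *: A0 (hi u)) *m A0 (lo u) = A0 (lo u) *m (14 *: A0 (hi u)).
  by rewrite -scalemxAl -scalemxAr Aq_comm.
rewrite (det_block_comm _ _ A0_comm) ?det_A0 ?lo_u //.
rewrite -scalemxAr -scaleN1r !Aq_mul !Aq_scale Aq_add det_A0 hi_u.
by cbv beta iota zeta delta [N4 qadd qmul qscale]; ring.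
Qed.

Definition omul0 := omul 0 (-5) 0 (-3) 0 (-14).

Lemma f0_mul x y : f0 (omul0 x y) = f0 x * f0 y.
Proof. exact: fpoly_mul. Qed.

Definition positive8 (x : {ffun 'I_8 -> int}) : Prop := forall i, 0 < x i.

Lemma positive8_tup8 a b c d e g h k :
  0 < a -> 0 < b -> 0 < c -> 0 < d -> 0 < e -> 0 < g -> 0 < h -> 0 < k ->
  positive8 (tup8 a b c d e g h k).
Proof.
move=> *; rewrite /positive8 => -[[|[|[|[|[|[|[|[|?]]]]]]]] ?] //; by rewrite ffunE.
Qed.

Lemma tup8_first a b c d e g h k : tup8 a b c d e g h k (inord 0) = a.
Proof. by rewrite ffunE inordK. Qed.

(* Multiplying a positive tuple by u keeps it positive (all structure
   constants are nonnegative) and at least quadruples its first coordinate. *)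
Lemma omul0_u_step x : positive8 x ->
  positive8 (omul0 x u) /\ x (inord 0) < omul0 x u (inord 0).
Proof.
move=> xpos; move: (xpos (inord 0)) (xpos (inord 1)) (xpos (inord 2))
  (xpos (inord 3)) (xpos (inord 4)) (xpos (inord 5)) (xpos (inord 6))
  (xpos (inord 7)) => *.
rewrite /omul0 /omul lo_u hi_u /lo /hi.
cbv beta iota zeta delta [pmul qadd qmul qscale oct fst snd].
by split; [apply: positive8_tup8 | rewrite tup8_first]; lia.
Qed.

(* powu k = u^(k+1). *)
Definition powu (k : nat) : {ffun 'I_8 -> int} := iter k (omul0^~ u) u.

Lemma f0_powu k : f0 (powu k) = 1.
Proof. by elim: k => [|k IHk]; rewrite ?f0_u //= f0_mul IHk f0_u mulr1. Qed.

Lemma powu_pos_grow k : positive8 (powu k) /\ k%:Z < powu k (inord 0).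
Proof.
elim: k => [|k [pos_k grow_k]].
  by split; [apply: positive8_tup8 | rewrite tup8_first].
have [pos_k1 grow_k1] := omul0_u_step pos_k.
by split => //=; lia.
Qed.

(* A sequence along which some nat-valued size exceeds the index is not
   contained in any finite list: take the index to be the total size. *)
Lemma escape_finite (T : eqType) (h : T -> nat) (x : nat -> T) :
  (forall k, k < h (x k))%N -> forall s : seq T, exists k, x k \notin s.
Proof.
move=> h_grows s; set N := (\sum_(y <- s) h y)%N.
have h_le_N y : y \in s -> (h y <= N)%N.
  by move=> y_in_s; rewrite /N (big_rem _ y_in_s) leq_addr.
by exists N; apply/negP => /h_le_N; rewrite leqNgt h_grows.
Qed.

Theorem mainTheorem11 :
  pos_solution (tup8 4 2 2 1 14 7 8 4) /\
  (forall s : seq {ffun 'I_8 -> int}, exists x, pos_solution x /\ x \notin s).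
Proof.
split; first by split; [exact: (powu_pos_grow 0).1 | exact: f0_u].
move=> s.
have powu_grows k : (k < `|powu k (inord 0)|)%N.
  by have := (powu_pos_grow k).2; lia.
have [k powu_notin] :=
  @escape_finite _ (fun y : {ffun 'I_8 -> int} => `|y (inord 0)|%N) powu powu_grows s.
by exists (powu k); split => //; split; [exact: (powu_pos_grow k).1 | exact: f0_powu].
Qed.
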